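(* For every rooted tree $T$: $\mathcal{P}(T;1,1)$ is the number of maximal antichains of $T$; $\mathcal{P}(T;x,0)=x^{m}$ where $m$ is the number of leaves of $T$; $\mathcal{P}(T;0,1)$ is the number of maximal antichains of $T$ containing no leaves; $\mathcal{P}(T;2,1)$ is the number of antichains of $T$ (including the empty set); $\mathcal{P}(T;1,2)$ is the number of cutsets of $T$; $\mathcal{P}(T;2,2)=2^{|T|}$.
   Context: For a rooted tree $T$ with root $r$, the branches $T_1,\dots,T_k$ are the subtrees obtained by deleting $r$, each rooted at the neighbour of $r$ it contains; $|T|$ is the number of vertices. The polynomial $\mathcal{P}(T;x,y)$ is defined recursively by $\mathcal{P}(T;x,y)=x$ if $T$ has a single vertex, and otherwise $\mathcal{P}(T;x,y)=\prod_{i=1}^k\mathcal{P}(T_i;x,y)+y^{|T|-1}$. An antichain in $T$ is a set of vertices no two of which lie on a common path starting at the root; a maximal antichain is one not properly contained in another antichain. A leaf is a vertex with no children. A cutset (transversal) is a set of vertices meeting every path from the root to a leaf. *)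

From HB Require Import structures.
From mathcomp Require Import all_boot all_order all_algebra.
Set Implicit Arguments. Unset Strict Implicit. Unset Printing Implicit Defensive.
Import GRing.Theory.

Inductive rtree : Type := Node of seq rtree.

Fixpoint tsize (t : rtree) : nat :=
  match t with
  | Node ts => ((fix aux (l : seq rtree) : nat :=
                  match l with [::] => 0 | s :: r => (tsize s + aux r) end) ts).+1
  end.

Local Open Scope ring_scope.

(* The polynomial P(T;x,y), evaluated at x y in a commutative ring R.
   The polynomial itself in Z[x,y] is the instance R = {poly {poly int}}. *)
Fixpoint Pev (R : comNzRingType) (x y : R) (t : rtree) : R :=
  match t with
  | Node [::] => x
  | Node ts => (fix prodP (l : seq rtree) : R :=
                  match l with [::] => 1 | s :: r => Pev x y s * prodP r end) ts
               + y ^+ (tsize t).-1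
  end.

(* Vertices are addresses: the root is [::]; the i-th child (0-based) of the
   vertex u is rcons u i. *)
Fixpoint vlist (t : rtree) : seq (seq nat) :=
  match t with
  | Node ts => [::] :: (fix aux (i : nat) (l : seq rtree) : seq (seq nat) :=
                         match l with
                         | [::] => [::]
                         | s :: r => map (cons i) (vlist s) ++ aux i.+1 r
                         end) 0%N ts
  end.

Definition vert (t : rtree) : finType := seq_sub (vlist t).

Definition anc (t : rtree) (u v : vert t) : bool := prefix (val u) (val v).

Definition antichain (t : rtree) (A : {set vert t}) : bool :=
  [forall u in A, forall v in A, (u != v) ==> ~~ anc u v].

Definition maximal_antichain (t : rtree) (A : {set vert t}) : bool :=
  maxset (@antichain t) A.

Definition child (t : rtree) (u v : vert t) : bool :=
  anc u v && (size (val v) == (size (val u)).+1).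

Definition leaf (t : rtree) (u : vert t) : bool := [forall v, ~~ child u v].

Definition cutset (t : rtree) (A : {set vert t}) : bool :=
  [forall l, leaf l ==> [exists v in A, anc v l]].

From Pilot Require Import Defs.
From HB Require Import structures.
From mathcomp Require Import all_boot all_order all_algebra.
Import GRing.Theory.
Set Implicit Arguments. Unset Strict Implicit. Unset Printing Implicit Defensive.

(* Let T have root r and branches T_1, ..., T_k.  Vertices of different
   branches are incomparable, so a vertex set of T avoiding r is an antichain
   (maximal antichain, maximal antichain without leaves, cutset) exactly when
   its trace on every branch is one.  Among the sets containing r, only {r}
   is an antichain, and it is maximal and leafless, while every such set is a
   cutset.  Each of these counts N therefore satisfies
   N(T) = N(T_1) ... N(T_k) + y^(|T|-1) with y = 1 or 2 and takes the value x
   on a single vertex, which is the recursion defining P(T;x,y).  The leaves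
   of T are those of its branches, and 2^|T| obeys the recursion at (2,2).
   Vertices are addresses in [vlist t], and a vertex set is encoded by the
   sublist of [vlist t] it selects. *)

Fixpoint sublists {T : Type} (s : seq T) : seq (seq T) :=
  if s is x :: s' then map (cons x) (sublists s') ++ sublists s' else [:: [::]].

Lemma size_sublists T (s : seq T) : size (sublists s) = 2 ^ size s.
Proof. by elim: s => //= x s IHs; rewrite size_cat size_map IHs expnS mul2n addnn. Qed.

Lemma sublists_map T1 T2 (f : T1 -> T2) s :
  sublists (map f s) = map (map f) (sublists s).
Proof. by elim: s => //= x s ->; rewrite map_cat -!map_comp. Qed.

Lemma sublists_cat T (s1 s2 : seq T) :
  sublists (s1 ++ s2) = [seq a ++ b | a <- sublists s1, b <- sublists s2].
Proof.
elim: s1 => /= [|x s1 ->]; first by rewrite cats0 map_id.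
by rewrite allpairs_cat allpairs_mapl map_allpairs.
Qed.

Lemma count_allpairs (S T : eqType) R (f : S -> T -> R) (p : pred R) p1 p2 s t :
  {in s & t, forall x y, p (f x y) = p1 x && p2 y} ->
  count p [seq f x y | x <- s, y <- t] = count p1 s * count p2 t.
Proof.
elim: s => //= x s IHs pf; rewrite count_cat count_map mulnDl IHs; last first.
  by move=> x' y sx' ty; rewrite pf // inE sx' orbT.
congr (_ + _); rewrite (@eq_in_count _ _ (fun y => p1 x && p2 y)).
  by case: (p1 x); rewrite ?mul1n ?mul0n ?count_pred0 //; apply: eq_count.
by move=> y ty; rewrite /= pf ?mem_head.
Qed.

Section SublistsEq.
Variable T : eqType.
Implicit Types s a b : seq T.

Lemma count_sublists_nil s : count (pred1 [::]) (sublists s) = 1.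
Proof.
elim: s => //= x s IHs; rewrite count_cat count_map IHs.
by rewrite (eq_count (a2 := pred0)) ?count_pred0.
Qed.

Lemma mem_sublists s a : (a \in sublists s) = subseq a s.
Proof.
apply/idP/idP => [|/subseqP[m _ ->]].
  elim: s a => /= [|x s IHs] a; first by rewrite inE => /eqP->.
  rewrite mem_cat => /orP[/mapP[a' /IHs sub_a' ->]|/IHs sub_a] /=; first by rewrite eqxx.
  exact: subseq_trans sub_a (subseq_cons s x).
elim: s m => [|x s IHs] [|[] m] //=; rewrite mem_cat ?map_f ?IHs ?orbT //.
by rewrite -(mask0s s) IHs orbT.
Qed.

Lemma uniq_sublists s : uniq s -> uniq (sublists s).
Proof.
elim: s => //= x s IHs /andP[s'x /IHs uniq_ss].
rewrite cat_uniq map_inj_uniq // => [|? ? []//]; rewrite uniq_ss andbT.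
apply/hasPn => a /[!mem_sublists] /mem_subseq sub_a; apply/mapP => -[b _ a_xb].
by move: s'x; rewrite sub_a // a_xb mem_head.
Qed.

Lemma sublists_mem_inj s a b : uniq s ->
  a \in sublists s -> b \in sublists s -> a =i b -> a = b.
Proof.
move=> uniq_s; rewrite !mem_sublists.
move=> /(subseq_uniqP uniq_s) def_a /(subseq_uniqP uniq_s) def_b eq_ab.
by rewrite def_a def_b; apply: eq_filter.
Qed.

End SublistsEq.

Definition all_rtree (P : rtree -> Prop) (ts : seq rtree) : Prop :=
  foldr (fun s acc => P s /\ acc) True ts.

Section NestedInduction.
Variable P : rtree -> Prop.
Hypothesis IHnode : forall ts, all_rtree P ts -> P (Node ts).

Fixpoint rtree_nested_ind t : P t :=
  let: Node ts := t in
  IHnode ((fix all_ind l : all_rtree P l :=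
             if l is s :: r then conj (rtree_nested_ind s) (all_ind r) else I) ts).

End NestedInduction.

Lemma eq_big_all_rtree R (idx : R) (op : R -> R -> R) (f g : rtree -> R) ts :
  all_rtree (fun s => f s = g s) ts ->
  \big[op/idx]_(s <- ts) f s = \big[op/idx]_(s <- ts) g s.
Proof.
elim: ts => [_|s ts IHts [eq_s /IHts eq_ts]]; first by rewrite !big_nil.
by rewrite !big_cons eq_s eq_ts.
Qed.

Lemma tsize_Node ts : Defs.tsize (Node ts) = (\sum_(s <- ts) Defs.tsize s).+1.
Proof. by congr S; elim: ts => [|s ts /= ->]; rewrite ?big_nil ?big_cons. Qed.

Fixpoint vforest (i : nat) (ts : seq rtree) : seq (seq nat) :=
  if ts is s :: r then map (cons i) (vlist s) ++ vforest i.+1 r else [::].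

Lemma vlist_Node ts : vlist (Node ts) = [::] :: vforest 0 ts.
Proof. by []. Qed.

Definition head_ge (i : nat) (v : seq nat) := if v is j :: _ then i <= j else false.

Lemma head_ge_vforest i ts : all (head_ge i) (vforest i ts).
Proof.
elim: ts i => //= s r IHr i; rewrite all_cat all_map; apply/andP; split.
  by apply/allP => v _ /=.
by apply: sub_all (IHr i.+1) => -[|j v] //= /ltnW.
Qed.

Lemma root_vforest ts : [::] \notin vforest 0 ts.
Proof. by apply/negP => /(allP (head_ge_vforest 0 ts)). Qed.

Lemma child_vforest s r : [:: 0] \in vforest 0 (s :: r).
Proof. by rewrite mem_cat map_f //; case: s. Qed.

Lemma size_vforest i ts : size (vforest i ts) = \sum_(s <- ts) size (vlist s).
Proof.
by elim: ts i => [|s r IHr] i; rewrite ?big_nil ?big_cons //= size_cat size_map IHr.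
Qed.

Lemma size_vlist t : size (vlist t) = Defs.tsize t.
Proof.
elim/rtree_nested_ind: t => ts IHts; rewrite vlist_Node tsize_Node /= size_vforest.
by congr S; apply: eq_big_all_rtree.
Qed.

Lemma uniq_vlist t : uniq (vlist t).
Proof.
elim/rtree_nested_ind: t => ts IHts; rewrite vlist_Node /= root_vforest /=.
elim: ts 0 IHts => //= s r IHr i [uniq_s /IHr uniq_r].
rewrite cat_uniq map_inj_uniq ?uniq_s ?uniq_r // => [|? ? []//]; rewrite andbT.
apply/hasPn => v /(allP (head_ge_vforest i.+1 r)); case: v => [|j v] //= lt_ij.
by apply/mapP => -[w _ [eq_ij _]]; rewrite eq_ij ltnn in lt_ij.
Qed.

Definition nested (u v : seq nat) := prefix u v || prefix v u.

Definition apart (V W : seq (seq nat)) := {in V & W, forall u v, ~~ nested u v}.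

Definition antichain_seq (a : seq (seq nat)) :=
  all (fun u => all (fun v => (u != v) ==> ~~ prefix u v) a) a.

Definition covering (V a : seq (seq nat)) := all (fun v => has (nested^~ v) a) V.

Definition maximal_antichain_seq (V a : seq (seq nat)) :=
  antichain_seq a && covering V a.

Definition leaf_in (V : seq (seq nat)) (u : seq nat) :=
  all (fun v => ~~ (prefix u v && (size v == (size u).+1))) V.

Definition leafless (V a : seq (seq nat)) := all (fun u => ~~ leaf_in V u) a.

Definition leafless_maximal_antichain_seq (V a : seq (seq nat)) :=
  maximal_antichain_seq V a && leafless V a.

Definition cutset_seq (V a : seq (seq nat)) :=
  all (fun l => leaf_in V l ==> has (fun u => prefix u l) a) V.

Section Shift.
Variable i : nat.
Implicit Types (u v : seq nat) (V a : seq (seq nat)).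

Lemma antichain_seq_shift a : antichain_seq (map (cons i) a) = antichain_seq a.
Proof.
rewrite /antichain_seq all_map; apply: eq_all => u /=; rewrite all_map.
by apply: eq_all => v /=; rewrite eqseq_cons !eqxx.
Qed.

Lemma covering_shift V a : covering (map (cons i) V) (map (cons i) a) = covering V a.
Proof.
rewrite /covering all_map; apply: eq_all => v /=; rewrite has_map.
by apply: eq_has => u; rewrite /= /nested /= !eqxx.
Qed.

Lemma leaf_in_shift V u : leaf_in (map (cons i) V) (i :: u) = leaf_in V u.
Proof. by rewrite /leaf_in all_map; apply: eq_all => v /=; rewrite eqxx. Qed.

Lemma leafless_shift V a : leafless (map (cons i) V) (map (cons i) a) = leafless V a.
Proof. by rewrite /leafless all_map; apply: eq_all => u /=; rewrite leaf_in_shift. Qed.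

Lemma cutset_seq_shift V a :
  cutset_seq (map (cons i) V) (map (cons i) a) = cutset_seq V a.
Proof.
rewrite /cutset_seq all_map; apply: eq_all => l /=; rewrite leaf_in_shift has_map.
by congr (_ ==> _); apply: eq_has => u; rewrite /= eqxx.
Qed.

End Shift.

Section Apart.
Implicit Types (u v : seq nat) (V W a b : seq (seq nat)).

Lemma apart_sym V W : apart V W -> apart W V.
Proof. by move=> VW v u Wv Vu; rewrite /nested orbC VW. Qed.

Lemma apart_sub V W a b : apart V W -> {subset a <= V} -> {subset b <= W} -> apart a b.
Proof. by move=> VW aV bW u v /aV Vu /bW Wv; apply: VW. Qed.

Lemma apart_shift i V W : all (head_ge i.+1) W -> apart (map (cons i) V) W.
Proof.
move=> /allP W_gt _ [|j v] /mapP[u _ ->] /W_gt //= lt_ij.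
by rewrite /nested !prefix_cons eq_sym (gtn_eqF lt_ij).
Qed.

Lemma apart_nested V W u v : apart V W -> u \in V -> v \in W -> nested u v = false.
Proof. by move=> VW Vu Wv; apply/negbTE/VW. Qed.

Lemma apart_prefix V W u v : apart V W -> u \in V -> v \in W -> prefix u v = false.
Proof. by move=> VW Vu Wv; have /norP[/negbTE] := VW u v Vu Wv. Qed.

Lemma leaf_in_cat V W u : leaf_in (V ++ W) u = leaf_in V u && leaf_in W u.
Proof. exact: all_cat. Qed.

Lemma leaf_in_apart V W u : apart V W -> u \in V -> leaf_in W u.
Proof. by move=> VW Vu; apply/allP => v Wv; rewrite (apart_prefix VW Vu Wv). Qed.

Lemma count_leaf_in_cat V W : apart V W ->
  count (leaf_in (V ++ W)) (V ++ W) = count (leaf_in V) V + count (leaf_in W) W.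
Proof.
move=> VW; rewrite count_cat; congr (_ + _); apply: eq_in_count => u Zu /=.
  by rewrite leaf_in_cat (leaf_in_apart VW Zu) andbT.
by rewrite leaf_in_cat (leaf_in_apart (apart_sym VW) Zu).
Qed.

Lemma antichain_seq_cat a b : apart a b ->
  antichain_seq (a ++ b) = antichain_seq a && antichain_seq b.
Proof.
move=> ab; rewrite /antichain_seq all_cat.
congr andb; apply: eq_in_all => u Zu /=; rewrite all_cat.
  suff -> : all (fun v => (u != v) ==> ~~ prefix u v) b by rewrite andbT.
  by apply/allP => v Zv; rewrite (apart_prefix ab Zu Zv) implybT.
suff -> : all (fun v => (u != v) ==> ~~ prefix u v) a by [].
by apply/allP => v Zv; rewrite (apart_prefix (apart_sym ab) Zu Zv) implybT.
Qed.

Section Cat.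
Variables (V W a b : seq (seq nat)).
Hypotheses (VW : apart V W) (aV : {subset a <= V}) (bW : {subset b <= W}).

Lemma covering_cat : covering (V ++ W) (a ++ b) = covering V a && covering W b.
Proof.
rewrite /covering all_cat; congr andb; apply: eq_in_all => v Zv /=; rewrite has_cat.
  rewrite [has _ b](_ : _ = false) ?orbF //; apply/hasPn => u /bW Zu.
  by rewrite /= (apart_nested (apart_sym VW) Zu Zv).
rewrite [has _ a](_ : _ = false) //; apply/hasPn => u /aV Zu.
by rewrite /= (apart_nested VW Zu Zv).
Qed.

Lemma leafless_cat : leafless (V ++ W) (a ++ b) = leafless V a && leafless W b.
Proof.
rewrite /leafless all_cat; congr andb; apply: eq_in_all => u Zu /=.
  by rewrite leaf_in_cat (leaf_in_apart VW (aV Zu)) andbT.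
by rewrite leaf_in_cat (leaf_in_apart (apart_sym VW) (bW Zu)).
Qed.

Lemma cutset_seq_cat : cutset_seq (V ++ W) (a ++ b) = cutset_seq V a && cutset_seq W b.
Proof.
rewrite /cutset_seq all_cat; congr andb; apply: eq_in_all => l Zl /=.
  rewrite leaf_in_cat (leaf_in_apart VW Zl) andbT has_cat.
  rewrite [has _ b](_ : _ = false) ?orbF //; apply/hasPn => u /bW Zu.
  by rewrite /= (apart_prefix (apart_sym VW) Zu Zl).
rewrite leaf_in_cat (leaf_in_apart (apart_sym VW) Zl) has_cat.
rewrite [has _ a](_ : _ = false) //; apply/hasPn => u /aV Zu.
by rewrite /= (apart_prefix VW Zu Zl).
Qed.

End Cat.
End Apart.

Definition branchwise (Q : seq (seq nat) -> pred (seq (seq nat))) :=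
  [/\ Q [::] [::],
      forall i V a, Q (map (cons i) V) (map (cons i) a) = Q V a &
      forall V W a b, apart V W -> {subset a <= V} -> {subset b <= W} ->
        Q (V ++ W) (a ++ b) = Q V a && Q W b].

Lemma antichain_seq_branchwise : branchwise (fun=> antichain_seq).
Proof.
split=> // [i _ a | V W a b VW aV bW]; first exact: antichain_seq_shift.
exact/antichain_seq_cat/(apart_sub VW aV bW).
Qed.

Lemma maximal_antichain_seq_branchwise : branchwise maximal_antichain_seq.
Proof.
split=> // [i V a | V W a b VW aV bW].
  by rewrite /maximal_antichain_seq antichain_seq_shift covering_shift.
rewrite /maximal_antichain_seq covering_cat // antichain_seq_cat.
  by rewrite andbACA.
exact: apart_sub VW aV bW.
Qed.

Lemma leafless_maximal_antichain_seq_branchwise :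
  branchwise leafless_maximal_antichain_seq.
Proof.
have [_ max_shift max_cat] := maximal_antichain_seq_branchwise.
split=> // [i V a | V W a b VW aV bW]; rewrite /leafless_maximal_antichain_seq.
  by rewrite max_shift leafless_shift.
by rewrite max_cat // leafless_cat // andbACA.
Qed.

Lemma cutset_seq_branchwise : branchwise cutset_seq.
Proof.
by split=> // [i V a | V W a b]; [apply: cutset_seq_shift | apply: cutset_seq_cat].
Qed.

Definition nvsets (Q : seq (seq nat) -> pred (seq (seq nat))) (V : seq (seq nat)) :=
  count (Q V) (sublists V).

Section BranchwiseCount.
Variable Q : seq (seq nat) -> pred (seq (seq nat)).
Hypothesis Q_branchwise : branchwise Q.

Lemma nvsets_vforest i ts :
  nvsets Q (vforest i ts) = \prod_(s <- ts) nvsets Q (vlist s).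
Proof.
have [Q_nil Q_shift Q_cat] := Q_branchwise.
elim: ts i => [|s r IHr] i; first by rewrite big_nil /nvsets /= Q_nil.
rewrite big_cons -(IHr i.+1) /nvsets /= sublists_cat sublists_map allpairs_mapl.
apply: count_allpairs => a b; rewrite !mem_sublists => sub_a sub_b.
rewrite Q_cat ?Q_shift //; first exact/apart_shift/head_ge_vforest.
  exact/mem_subseq/map_subseq.
exact: mem_subseq.
Qed.

Lemma nvsets_Node s r (F := vforest 0 (s :: r)) :
  (forall a, {subset a <= F} -> Q ([::] :: F) a = Q F a) ->
  nvsets Q (vlist (Node (s :: r))) =
  count (fun a => Q ([::] :: F) ([::] :: a)) (sublists F) +
  \prod_(u <- s :: r) nvsets Q (vlist u).
Proof.
move=> Q_root; rewrite vlist_Node /nvsets /= count_cat count_map -(nvsets_vforest 0).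
by congr (_ + _); apply: eq_in_count => a /[!mem_sublists] /mem_subseq /Q_root.
Qed.

End BranchwiseCount.

Lemma count_leaf_in_vforest i ts :
  count (leaf_in (vforest i ts)) (vforest i ts) =
  \sum_(s <- ts) count (leaf_in (vlist s)) (vlist s).
Proof.
elim: ts i => [|s r IHr] i; rewrite ?big_nil ?big_cons //=.
rewrite count_leaf_in_cat; last exact/apart_shift/head_ge_vforest.
rewrite count_map IHr; congr (_ + _); apply: eq_count => u /=.
by rewrite leaf_in_shift.
Qed.

Lemma leaf_in_cons_root V u : leaf_in ([::] :: V) u = leaf_in V u.
Proof. by rewrite /leaf_in /= andbF. Qed.

Lemma leafless_cons_root V a : leafless ([::] :: V) a = leafless V a.
Proof. by apply: eq_all => u; congr negb; apply: leaf_in_cons_root. Qed.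

Lemma covering_root V a : covering V ([::] :: a).
Proof. by apply/allP => v _ /=; rewrite /nested prefix0s. Qed.

Lemma cutset_seq_root V a : cutset_seq V ([::] :: a).
Proof. by apply/allP => l _ /=; rewrite prefix0s implybT. Qed.

Section Root.
Variable F : seq (seq nat).
Hypotheses (root_F : [::] \notin F) (child_F : [:: 0] \in F).

Lemma leaf_in_root : leaf_in F [::] = false.
Proof. by apply/negbTE/allPn; exists [:: 0]. Qed.

Lemma antichain_seq_root a : {subset a <= F} -> antichain_seq ([::] :: a) = (a == [::]).
Proof.
case: a => [|v a] //= aF; have Fv : v \in F := aF v (mem_head v a).
apply/negbTE/allPn; exists [::]; first exact: mem_head.
apply/allPn; exists v; first by rewrite !inE eqxx orbT.
by rewrite prefix0s implybF negbK; apply: contraNneq root_F => ->.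
Qed.

Lemma covering_cons_root a : covering ([::] :: F) a = covering F a.
Proof.
rewrite /covering /=; case: a => [|u a] /=; last by rewrite /nested prefix0s orbT.
by apply/esym/negbTE/allPn; exists [:: 0].
Qed.

Lemma cutset_seq_cons_root a : cutset_seq ([::] :: F) a = cutset_seq F a.
Proof.
rewrite /cutset_seq; under eq_all => l do rewrite leaf_in_cons_root.
by rewrite -cat1s all_cat all_seq1 leaf_in_root.
Qed.

End Root.

Section NodeCounts.
Variables (s : rtree) (r : seq rtree).
Let F := vforest 0 (s :: r).
Let root_F : [::] \notin F := root_vforest (s :: r).
Let child_F : [:: 0] \in F := child_vforest s r.

Lemma nvsets_antichain_Node :
  nvsets (fun=> antichain_seq) (vlist (Node (s :: r))) =
  1 + \prod_(u <- s :: r) nvsets (fun=> antichain_seq) (vlist u).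
Proof.
rewrite nvsets_Node //; last exact: antichain_seq_branchwise.
congr (_ + _); rewrite -(count_sublists_nil F).
by apply: eq_in_count => a /[!mem_sublists] /mem_subseq /(antichain_seq_root root_F).
Qed.

Lemma nvsets_maximal_antichain_Node :
  nvsets maximal_antichain_seq (vlist (Node (s :: r))) =
  1 + \prod_(u <- s :: r) nvsets maximal_antichain_seq (vlist u).
Proof.
rewrite nvsets_Node; last first.
- by move=> a _; rewrite /maximal_antichain_seq covering_cons_root.
- exact: maximal_antichain_seq_branchwise.
congr (_ + _); rewrite -(count_sublists_nil F).
apply: eq_in_count => a /[!mem_sublists] /mem_subseq aF.
by rewrite /maximal_antichain_seq covering_root andbT (antichain_seq_root root_F).
Qed.

Lemma nvsets_leafless_maximal_antichain_Node :
  nvsets leafless_maximal_antichain_seq (vlist (Node (s :: r))) =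
  1 + \prod_(u <- s :: r) nvsets leafless_maximal_antichain_seq (vlist u).
Proof.
rewrite nvsets_Node; last first.
- move=> a _; rewrite /leafless_maximal_antichain_seq /maximal_antichain_seq.
  by rewrite leafless_cons_root covering_cons_root.
- exact: leafless_maximal_antichain_seq_branchwise.
congr (_ + _); rewrite -(count_sublists_nil F).
apply: eq_in_count => a /[!mem_sublists] /mem_subseq aF.
rewrite /leafless_maximal_antichain_seq /maximal_antichain_seq covering_root andbT.
rewrite [RHS]/= (antichain_seq_root root_F) //; case: eqP => [->|//].
by rewrite leafless_cons_root /leafless all_seq1 leaf_in_root.
Qed.

Lemma nvsets_cutset_Node :
  nvsets cutset_seq (vlist (Node (s :: r))) =
  2 ^ (\sum_(u <- s :: r) Defs.tsize u) + \prod_(u <- s :: r) nvsets cutset_seq (vlist u).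
Proof.
rewrite nvsets_Node; last first.
- by move=> a _; apply: cutset_seq_cons_root.
- exact: cutset_seq_branchwise.
rewrite (eq_count (cutset_seq_root _)) count_predT size_sublists size_vforest.
by rewrite (eq_bigr _ (fun u _ => size_vlist u)).
Qed.

Lemma count_leaf_in_Node :
  count (leaf_in (vlist (Node (s :: r)))) (vlist (Node (s :: r))) =
  \sum_(u <- s :: r) count (leaf_in (vlist u)) (vlist u).
Proof.
rewrite vlist_Node (eq_count (leaf_in_cons_root F)) -cat1s count_cat.
by rewrite -(count_leaf_in_vforest 0) /= leaf_in_root.
Qed.

End NodeCounts.

Section VertexSets.
Variable t : rtree.
Local Notation V := (vlist t).
Implicit Types (A B : {set vert t}) (a : seq (seq nat)).

Lemma antichainP A : reflect {in A &, forall u v, u != v -> ~~ anc u v} (antichain A).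
Proof.
apply: (iffP forall_inP) => [anti u v Au Av | anti u Au].
  by move/forall_inP: (anti u Au) => /(_ v Av)/implyP.
by apply/forall_inP => v Av; apply/implyP; apply: anti.
Qed.

Lemma maximal_antichainE A :
  maximal_antichain A = antichain A && [forall v, [exists u in A, anc u v || anc v u]].
Proof.
apply/maxsetP/andP => [[anti maxA] | [anti /forallP cover]].
  split => //; apply/forallP => v; apply: contraT => /exists_inPn incomp.
  have vA : v \notin A by apply/negP => /incomp; rewrite /anc prefix_refl.
  suff /maxA/(_ (subsetUr _ _)) eq_vA : antichain (v |: A) by rewrite -eq_vA setU11 in vA.
  apply/antichainP => x y; rewrite !in_setU1.
  case/predU1P => [-> | Ax] /predU1P[-> | Ay]; rewrite ?eqxx // => neq_xy.
  - by have /norP[] := incomp y Ay.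
  - by have /norP[] := incomp x Ax.
  - exact: (elimT (antichainP A) anti x y Ax Ay neq_xy).
split=> // B /antichainP antiB AB; apply/eqP; rewrite eqEsubset AB andbT.
apply/subsetP => v Bv; have /exists_inP[u Au] := cover v.
have [<- // | neq_uv] := eqVneq u v.
have Bu := subsetP AB u Au; have neq_vu : v != u by rewrite eq_sym.
by rewrite (negbTE (antiB _ _ Bu Bv neq_uv)) (negbTE (antiB _ _ Bv Bu neq_vu)).
Qed.

Definition vset a : {set vert t} := [set v : vert t | val v \in a].

Lemma forall_vert (P : pred (vert t)) (p : pred (seq nat)) :
  (forall u, P u = p (val u)) -> [forall u, P u] = all p V.
Proof.
move=> Pp; apply/forallP/allP => [P_all x Vx | p_all u].
  by have := P_all (SeqSub Vx); rewrite Pp.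
by rewrite Pp; apply/p_all/valP.
Qed.

Lemma leafE (u : vert t) : leaf u = leaf_in V (val u).
Proof. exact: forall_vert. Qed.

Section SubsetOfVertices.
Variable a : seq (seq nat).
Hypothesis aV : {subset a <= V}.

Lemma forall_in_vset (P : pred (vert t)) (p : pred (seq nat)) :
  (forall u, P u = p (val u)) -> [forall u in vset a, P u] = all p a.
Proof.
move=> Pp; apply/forall_inP/allP => [P_all x ax | p_all u].
  by have := P_all (SeqSub (aV ax)); rewrite inE Pp; apply.
by rewrite inE Pp; apply: p_all.
Qed.

Lemma exists_in_vset (P : pred (vert t)) (p : pred (seq nat)) :
  (forall u, P u = p (val u)) -> [exists u in vset a, P u] = has p a.
Proof.
move=> Pp; apply/exists_inP/hasP => [[u] | [x ax px]].
  by rewrite inE Pp; exists (val u).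
by exists (SeqSub (aV ax)); rewrite ?inE ?Pp.
Qed.

Lemma antichain_vset : antichain (vset a) = antichain_seq a.
Proof. by apply: forall_in_vset => // u; apply: forall_in_vset. Qed.

Lemma maximal_antichain_vset :
  maximal_antichain (vset a) = maximal_antichain_seq V a.
Proof.
rewrite maximal_antichainE antichain_vset; congr andb.
by apply: forall_vert => v; apply: exists_in_vset.
Qed.

Lemma leafless_maximal_antichain_vset :
  maximal_antichain (vset a) && [forall u in vset a, ~~ leaf u] =
  leafless_maximal_antichain_seq V a.
Proof.
rewrite maximal_antichain_vset; congr andb.
by apply: forall_in_vset => // u; rewrite leafE.
Qed.

Lemma cutset_vset : cutset (vset a) = cutset_seq V a.
Proof.
apply: forall_vert => l; rewrite leafE; congr (_ ==> _).
exact: exists_in_vset.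
Qed.

End SubsetOfVertices.

Lemma card_vsets (P : pred {set vert t}) Q :
  (forall a, {subset a <= V} -> P (vset a) = Q V a) -> #|[set A | P A]| = nvsets Q V.
Proof.
move=> PQ; have uniqV := uniq_vlist t.
have vset_inj : {in sublists V &, injective vset}.
  move=> a b sa sb /setP eq_ab; apply: (sublists_mem_inj uniqV sa sb) => x.
  have [Vx | V'x] := boolP (x \in V); first by have := eq_ab (SeqSub Vx); rewrite !inE.
  move: sa sb; rewrite !mem_sublists => /mem_subseq aV /mem_subseq bV.
  by apply/idP/idP => [/aV | /bV]; rewrite (negbTE V'x).
have vset_onto A : A = vset [seq x <- V | x \in map val (enum A)].
  by apply/setP => v; rewrite inE mem_filter (valP v) andbT (mem_map val_inj) mem_enum.
have perm_vsets : perm_eq (map vset (sublists V)) (index_enum {set vert t}).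
  apply: uniq_perm; rewrite ?index_enum_uniq ?map_inj_in_uniq ?uniq_sublists //.
  by move=> A; rewrite mem_index_enum [A]vset_onto map_f // mem_sublists filter_subseq.
rewrite cardsE -sum1_card -(perm_big _ perm_vsets) big_map sum1_count.
by apply: eq_in_count => a /[!mem_sublists] /mem_subseq /PQ.
Qed.

Lemma card_leaves : #|[set u : vert t | leaf u]| = count (leaf_in V) V.
Proof.
rewrite cardsE cardE /enum_mem size_filter (@eq_count _ _ (leaf_in V \o val)).
  by rewrite -count_map unlock val_seq_sub_enum ?uniq_vlist.
exact: leafE.
Qed.

Lemma card_vert : #|vert t| = Defs.tsize t.
Proof. by rewrite card_seq_sub ?uniq_vlist // size_vlist. Qed.

End VertexSets.

Local Open Scope ring_scope.

Lemma Pev_cons (R : comNzRingType) (x y : R) s r :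
  Pev x y (Node (s :: r)) =
  \prod_(u <- s :: r) Pev x y u + y ^+ (\sum_(u <- s :: r) Defs.tsize u)%N.
Proof.
(* [prodP] is verbatim the local fixpoint in the body of [Pev]. *)
pose prodP := fix prodP l := if l is u :: l' then Pev x y u * prodP l' else 1.
have -> : Pev x y (Node (s :: r)) =
    prodP (s :: r) + y ^+ (Defs.tsize (Node (s :: r))).-1 by [].
rewrite tsize_Node; congr (_ + _).
by elim: (s :: r) => [|u l /= ->]; rewrite ?big_nil ?big_cons.
Qed.

Lemma eq_Pev (R : comNzRingType) (x y : R) (f : rtree -> R) :
  f (Node [::]) = x ->
  (forall s r, f (Node (s :: r)) =
     \prod_(u <- s :: r) f u + y ^+ (\sum_(u <- s :: r) Defs.tsize u)%N) ->
  forall t, f t = Pev x y t.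
Proof.
move=> f_leaf f_node; elim/rtree_nested_ind => -[_ //|s r IHts].
by rewrite f_node Pev_cons; congr (_ + _); apply: eq_big_all_rtree.
Qed.

Lemma Pev_maximal_antichain t :
  Pev (1 : int) 1 t = (nvsets maximal_antichain_seq (vlist t))%:R.
Proof.
symmetry; apply: (eq_Pev (f := fun t => (nvsets _ (vlist t))%:R)) => // s r.
by rewrite nvsets_maximal_antichain_Node natrD natr_prod expr1n addrC.
Qed.

Lemma Pev_leaf t :
  Pev ('X : {poly int}) 0 t = 'X ^+ count (leaf_in (vlist t)) (vlist t).
Proof.
symmetry.
apply: (eq_Pev (f := fun t => 'X ^+ count (leaf_in (vlist t)) (vlist t))) => // s r.
rewrite count_leaf_in_Node prodrXr expr0n [(\sum_(u <- _) Defs.tsize u)%N]big_cons.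
by case: s => ts; rewrite tsize_Node addSn addr0.
Qed.

Lemma Pev_leafless_maximal_antichain t :
  Pev (0 : int) 1 t = (nvsets leafless_maximal_antichain_seq (vlist t))%:R.
Proof.
symmetry; apply: (eq_Pev (f := fun t => (nvsets _ (vlist t))%:R)) => // s r.
by rewrite nvsets_leafless_maximal_antichain_Node natrD natr_prod expr1n addrC.
Qed.

Lemma Pev_antichain t :
  Pev (2 : int) 1 t = (nvsets (fun=> antichain_seq) (vlist t))%:R.
Proof.
symmetry; apply: (eq_Pev (f := fun t => (nvsets _ (vlist t))%:R)) => // s r.
by rewrite nvsets_antichain_Node natrD natr_prod expr1n addrC.
Qed.

Lemma Pev_cutset t : Pev (1 : int) 2 t = (nvsets cutset_seq (vlist t))%:R.
Proof.
symmetry; apply: (eq_Pev (f := fun t => (nvsets _ (vlist t))%:R)) => // s r.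
by rewrite nvsets_cutset_Node natrD natr_prod natrX addrC.
Qed.

Lemma Pev_2_2 t : Pev (2 : int) 2 t = 2 ^+ Defs.tsize t.
Proof.
symmetry; apply: (eq_Pev (f := fun t => 2 ^+ Defs.tsize t)) => // s r.
by rewrite prodrXr tsize_Node exprS mulr2n mulrDl mul1r.
Qed.

Theorem proposition2p11 (t : rtree) :
  Pev (1 : int) 1 t = (#|[set A : {set vert t} | maximal_antichain A]|)%:R /\
  Pev ('X : {poly int}) 0 t = 'X ^+ #|[set u : vert t | leaf u]| /\
  Pev (0 : int) 1 t =
    (#|[set A : {set vert t} | maximal_antichain A & [forall u in A, ~~ leaf u]]|)%:R /\
  Pev (2 : int) 1 t = (#|[set A : {set vert t} | antichain A]|)%:R /\
  Pev (1 : int) 2 t = (#|[set A : {set vert t} | cutset A]|)%:R /\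
  Pev (2 : int) 2 t = 2 ^+ #|vert t|.
Proof.
rewrite (card_vsets (@maximal_antichain_vset t)).
rewrite (card_vsets (@leafless_maximal_antichain_vset t)).
rewrite (card_vsets (Q := fun=> antichain_seq) (@antichain_vset t)).
rewrite (card_vsets (@cutset_vset t)) card_leaves card_vert.
rewrite Pev_maximal_antichain Pev_leaf Pev_leafless_maximal_antichain.
by rewrite Pev_antichain Pev_cutset Pev_2_2.
Qed.
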